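(* Let $G=\mathrm{GL}_n(q)$, let $P$ be a parabolic subgroup of $G$ (for instance $P=\mathrm{P}_{n,d}(q)$), and let $x\in G$ have Jordan decomposition $x=su$ ($s$ semisimple, $u$ unipotent, $su=us$). Put $H=C_G(s)$. Let $\mathcal{P}_s=\{gPg^{-1}\mid g\in G,\ s\in gPg^{-1}\}$, on which $H$ acts by conjugation, and let $\mathcal{Q}$ be a set of representatives of the $H$-orbits on $\mathcal{P}_s$. Then for each $P'\in\mathcal{Q}$, $P'\cap H$ is a parabolic subgroup of $H$, and \[ f_P^G(x)=\sum_{P'\in\mathcal{Q}} f^H_{P'\cap H}(u). \]
   Context: For a finite group $G$, a subgroup $Q\le G$ and $x\in G$, $f_Q^G(x)$ denotes the number of $G$-conjugates of $Q$ containing $x$, i.e. $f_Q^G(x)=|\{yQy^{-1}\mid y\in G,\ x\in yQy^{-1}\}|$. Here $C_G(s)$ is the centralizer of $s$ in $G$; it is isomorphic to a direct product of groups $\mathrm{GL}_m(q^l)$, and ''parabolic subgroup of $H$'' means a product of parabolic subgroups of these factors (equivalently, the $\mathbb{F}_q$-points of an $F$-stable parabolic subgroup of $C_{\mathrm{GL}_n(K)}(s)$, $K=\overline{\mathbb{F}_q}$, $F$ the $q$-Frobenius). *)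

From HB Require Import structures.
From mathcomp Require Import all_boot all_order all_algebra all_fingroup all_field.
Set Implicit Arguments. Unset Strict Implicit. Unset Printing Implicit Defensive.
Import GRing.Theory.

Local Open Scope ring_scope.

Section GLDefs.
Variables (F : finFieldType) (n : nat).

(* G = GL_{n+1}(F); vectors are row vectors, g acts by v |-> v *m g,
   subspaces of F^(n+1) are row spaces of square matrices. *)
Local Notation gT := {'GL_n.+1[F]}.

Definition sub_stab (W : 'M[F]_n.+1) : {set gT} :=
  [set g : gT | (W *m GLval g <= W)%MS].

Definition is_flag (Ws : seq 'M[F]_n.+1) : bool :=
  sorted (fun A B => (A <= B)%MS) Ws.

Definition flag_stab (Ws : seq 'M[F]_n.+1) : {set gT} :=
  \bigcap_(W <- Ws) sub_stab W.

Definition parabolic (P : {set gT}) : Prop :=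
  exists Ws, is_flag Ws /\ P = flag_stab Ws.

(* parabolic subgroups of H = C_G(s) ~ prod_i GL_{m_i}(q^{l_i}): stabilizers in H
   of flags of F[s]-submodules (s-invariant subspaces) of F^(n+1), i.e. products of
   stabilizers of flags of F_{q^{l_i}}-subspaces in the factors. *)
Definition parabolic_centralizer (s : gT) (Q : {set gT}) : Prop :=
  exists Ws, [/\ is_flag Ws, all (fun W => (W *m GLval s <= W)%MS) Ws
               & Q = ('C[s] :&: flag_stab Ws)%g].

(* semisimple: minimal polynomial separable (diagonalizable over F-bar) *)
Definition semisimple (s : gT) : bool := separable_poly (mxminpoly (GLval s)).

Definition unipotent (u : gT) : Prop := exists k : nat, (GLval u - 1) ^+ k = 0.

End GLDefs.

Definition fcount (gT : finGroupType) (Q G : {set gT}) (x : gT) : nat :=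
  #|[set (Q :^ y)%g | y in G & x \in (Q :^ y)%g]|.

(* Since #[s] is prime to p = char F while #[u] is a power of p, both s and u
   are powers of x = s u, so a subgroup contains x iff it contains s and u.
   Hence the G-conjugates of P containing x are the members of P_s containing
   u; counting them orbit by orbit under H = C_G(s) leaves to show that
   Q |-> Q :&: H is injective on the H-orbit of each P' in P_s, i.e. that
   N_H(P' :&: H) <= P'.  Such a P' stabilizes a flag of s-stable subspaces
   (so P' :&: H is parabolic in H).  If k in H normalizes P' :&: H and W is in
   the flag, then W k is stable under the elements 1 + (1 - E) N E of P' :&: H,
   where E is an s-equivariant projection onto W and N commutes with s; as
   F[s] is semisimple, a rank count of s-homomorphic images then forces
   W k = W. *)

Set Warnings "-notation-overridden -ambiguous-paths -deprecated".
From HB Require Import structures.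
From mathcomp Require Import all_boot all_order all_algebra all_fingroup all_field all_solvable.
Set Implicit Arguments. Unset Strict Implicit. Unset Printing Implicit Defensive.
Import GRing.Theory.

Lemma card_cover_sum (T : finType) (A Qs : {set T}) (B : T -> {set T}) :
  {in Qs, forall R, B R \subset A} ->
  {in A, forall Q, exists2 R, R \in Qs & Q \in B R} ->
  {in Qs &, forall R1 R2 Q, Q \in B R1 -> Q \in B R2 -> R1 = R2} ->
  #|A| = (\sum_(R in Qs) #|B R|)%N.
Proof.
move=> sBA coverA uniqB.
transitivity (\sum_(Q in A) \sum_(R in Qs) (Q \in B R))%N.
  rewrite -sum1_card; apply: eq_bigr => Q /coverA[R RQs QR].
  rewrite (bigD1 R) //= QR big1 // => R' /andP[R'Qs neR'].
  case QR' : (Q \in B R') => //.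
  by rewrite (uniqB _ _ R'Qs RQs _ QR' QR) eqxx in neR'.
rewrite exchange_big; apply: eq_bigr => R RQs.
rewrite -big_mkcondr -sum1_card /=; apply: eq_bigl => Q.
by apply/andP/idP => [[] | QR]; last rewrite (subsetP (sBA R RQs)).
Qed.

Section FiniteGroups.
Variable gT : finGroupType.
Local Open Scope group_scope.

Lemma mem_mul_pi_decomp pi (G : {group gT}) s u :
  commute s u -> pi^'.-elt s -> pi.-elt u -> (s * u \in G) = (s \in G) && (u \in G).
Proof.
move=> csu s_pi' u_pi.
have Es : (s * u).`_pi^' = s.
  have u_pi'' : pi^'^'.-elt u by rewrite p_eltNK.
  by rewrite consttM // (constt_p_elt s_pi') (constt1P u_pi'') mulg1.
have Eu : (s * u).`_pi = u.
  by rewrite consttM // (constt1P s_pi') constt_p_elt // mul1g.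
apply/idP/andP => [suG | [sG uG]]; last exact: groupM.
by split; [rewrite -Es | rewrite -Eu]; apply: groupX.
Qed.

Lemma card_conjugates_meet (R H : {group gT}) u :
  u \in H -> 'N_H(R :&: H) \subset R ->
  #|[set Q in R :^: H | u \in Q]| = fcount (R :&: H) H u.
Proof.
move=> uH nRH_R.
have conjIH h : h \in H -> (R :&: H) :^ h = R :^ h :&: H.
  by move=> hH; rewrite conjIg (conjGid hH).
have -> : [set Q in R :^: H | u \in Q] = [set R :^ h | h in H & u \in R :^ h].
  apply/setP => Q; rewrite inE; apply/andP/imsetP => [[/imsetP[h hH ->] uQ] | [h]].
    by exists h; rewrite // inE hH.
  by rewrite inE => /andP[hH uRh] ->; split; first exact: imset_f.
rewrite /fcount -(@card_in_imset _ _ (fun Q => Q :&: H)); last first.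
  move=> _ _ /imsetP[a] /[!inE] /andP[aH _] -> /imsetP[b] /[!inE] /andP[bH _] -> /= eqRH.
  have nab : a * b^-1 \in 'N_H(R :&: H).
    rewrite in_setI groupM ?groupV //=; apply/normP.
    by rewrite conjsgM conjIH // eqRH -conjIH // conjsgK.
  by rewrite -[in RHS](conjGid (subsetP nRH_R _ nab)) -conjsgM mulgKV.
apply: eq_card => Q; apply/imsetP/imsetP.
  case=> _ /imsetP[h] /[!inE] /andP[hH uh] -> ->.
  by exists h; rewrite ?conjIH // inE hH conjIH // inE uh uH.
case=> h /[!inE] /andP[hH]; rewrite conjIH // inE => /andP[uh _] ->.
by exists (R :^ h); rewrite ?conjIH //; apply/imsetP; exists h; rewrite ?inE ?hH.
Qed.

Section ConjugatesContaining.
Variables (P : {group gT}) (s : gT).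
Local Notation Ps := [set P :^ g | g in [set: gT] & s \in P :^ g].

Lemma fcount_mul_pi_decomp pi u :
  commute s u -> pi^'.-elt s -> pi.-elt u ->
  fcount P [set: gT] (s * u) = #|[set Q in Ps | u \in Q]|.
Proof.
move=> csu s_pi' u_pi; apply: eq_card => Q; rewrite [in RHS]inE.
apply/imsetP/andP => [[g] | [/imsetP[g] /[!inE] /andP[_ s_Pg] -> u_Pg]].
  rewrite inE /= (mem_mul_pi_decomp (P :^ g)%G csu s_pi' u_pi).
  case/andP=> _ /andP[s_Pg u_Pg] ->; split=> //.
  by apply/imsetP; exists g; rewrite ?inE ?s_Pg.
by exists g => //; rewrite inE in_setT groupM.
Qed.

Lemma card_conjugates_cent_sum (Qs : {set {set gT}}) u :
  Qs \subset Ps ->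
  (forall Q, Q \in Ps -> exists2 R, R \in Qs & exists2 h, h \in 'C[s] & Q = R :^ h) ->
  (forall R1 R2, R1 \in Qs -> R2 \in Qs ->
     (exists2 h, h \in 'C[s] & R2 = R1 :^ h) -> R1 = R2) ->
  #|[set Q in Ps | u \in Q]| = (\sum_(R in Qs) #|[set Q in R :^: 'C[s] | u \in Q]|)%N.
Proof.
move=> sQs coverQs uniqQs; apply: card_cover_sum.
- move=> R /(subsetP sQs) /imsetP[g] /[!inE] /= s_Pg ->.
  apply/subsetP => _ /setIdP[/imsetP[h /cent1P cs_h ->] u_Pgh].
  rewrite inE u_Pgh andbT; apply/imsetP; exists (g * h); rewrite ?conjsgM //.
  have s_h : s ^ h = s by rewrite conjgE -cs_h mulKg.
  by rewrite inE in_setT conjsgM -s_h memJ_conjg.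
- move=> Q /setIdP[QPs uQ]; have [R RQs [h hC DQ]] := coverQs Q QPs.
  by exists R; rewrite // inE uQ DQ andbT imset_f.
move=> R1 R2 R1Qs R2Qs _ /setIdP[/imsetP[a aC ->] _] /setIdP[/imsetP[b bC R12]] _.
apply: uniqQs => //; exists (a * b^-1); first by rewrite groupM ?groupV.
by rewrite conjsgM R12 conjsgK.
Qed.

End ConjugatesContaining.

End FiniteGroups.

Section MatrixFacts.
Local Open Scope ring_scope.

Lemma GL_XE (F : finFieldType) n (g : {'GL_n.+1[F]}) k : GLval (g ^+ k)%g = GLval g ^+ k.
Proof. exact: FinRing.val_unitX. Qed.

Lemma GL_conjE (F : finFieldType) n (g h : {'GL_n.+1[F]}) :
  GLval (g ^ h)%g = invmx h *m g *m h.
Proof. by rewrite conjgE !GL_MxE GL_VxE mulmxA. Qed.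

Lemma GL_row_free (F : finFieldType) n (g : {'GL_n.+1[F]}) : row_free g.
Proof. by rewrite row_free_unit GL_unitmx. Qed.

Lemma horner_mx_Xn (R : comNzRingType) m (A : 'M[R]_m.+1) k : horner_mx A 'X^k = A ^+ k.
Proof. by rewrite rmorphXn /= horner_mx_X. Qed.

Lemma separable_dvdp_exp (R : fieldType) (q r : {poly R}) e :
  separable_poly q -> q %| r ^+ e -> q %| r.
Proof.
move=> sep_q q_re; pose g := gcdp q r; pose d := q %/ g.
have Dq : q = d * g by rewrite /d divpK // dvdp_gcdl.
have d_q : d %| q by rewrite [in X in _ %| X]Dq dvdp_mulIl.
have cop_dr : coprimep d r.
  have gcd_dr_g : gcdp d r %| g by rewrite dvdp_gcd (dvdp_trans (dvdp_gcdl _ _) d_q) dvdp_gcdr.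
  have : gcdp d r * gcdp d r %| q by rewrite Dq dvdp_mul // dvdp_gcdl.
  by move/(separable_coprime sep_q); rewrite coprimepp coprimep_def.
have : coprimep d d.
  by rewrite (coprimep_dvdr (dvdp_trans d_q q_re)) // coprimep_sym coprimep_expr.
rewrite coprimepp -dvdp1 => d1.
by rewrite Dq -[r]mul1r dvdp_mul // dvdp_gcdr.
Qed.

Lemma mulmx_proj_sub (F : fieldType) m n (E W : 'M[F]_n) (X : 'M_(m, n)) :
  W *m E = W -> (X <= W)%MS -> X *m E = X.
Proof. by move=> WE /submxP[D ->]; rewrite -mulmxA WE. Qed.

Lemma capmx_retract_eq0 (F : fieldType) m1 m2 n k (A : 'M[F]_(m1, n)) (B : 'M_(m2, n))
    (P : 'M_(n, k)) (Q : 'M_(k, n)) :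
  A *m P = 0 -> B *m (P *m Q) = B -> (A :&: B)%MS = 0.
Proof.
move=> AP0 BPQ; move: (A :&: B)%MS (capmxSl A B) (capmxSr A B) => X XA XB.
have XP0 : X *m P = 0 by rewrite -(mulmxKpV XA) -mulmxA AP0 mulmx0.
have XPQ : X *m (P *m Q) = X by rewrite -{1}(mulmxKpV XB) -mulmxA BPQ mulmxKpV.
by rewrite -XPQ mulmxA XP0 mul0mx.
Qed.

End MatrixFacts.

Section Flags.
Variables (F : finFieldType) (n : nat).
Local Notation gT := {'GL_n.+1[F]}.
Local Notation M := 'M[F]_n.+1.
Local Open Scope ring_scope.
Implicit Types (Ws : seq M) (g : gT).

Lemma flag_stabP Ws g : (g \in flag_stab Ws) = all (fun W => stablemx W g) Ws.
Proof.
rewrite /flag_stab; elim: Ws => [|W Ws IH]; first by rewrite big_nil inE.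
by rewrite big_cons in_setI IH inE.
Qed.

Lemma flag_stab_group_set Ws : group_set (flag_stab Ws).
Proof.
apply/group_setP; split=> [|g h]; rewrite !flag_stabP.
  by apply/allP => W _; rewrite GL_1E mulmx1.
move=> /allP Wg /allP Wh; apply/allP => W WWs.
by rewrite GL_MxE mulmxA (submx_trans (submxMr _ (Wg W WWs)) (Wh W WWs)).
Qed.

Canonical flag_stab_group Ws := Group (flag_stab_group_set Ws).

Lemma flag_stabJ Ws g : (flag_stab Ws :^ g)%g = flag_stab [seq W *m g | W <- Ws].
Proof.
apply/setP => y; rewrite mem_conjg !flag_stabP all_map; apply: eq_all => W.
rewrite GL_conjE GL_VxE invmxK -(submxMfree _ _ (GL_row_free g)) !mulmxA.
by rewrite mulmxKV ?GL_unitmx.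
Qed.

Lemma is_flag_map Ws (A : M) : is_flag Ws -> is_flag [seq W *m A | W <- Ws].
Proof. by apply: homo_sorted => W1 W2; apply: submxMr. Qed.

Lemma is_flag_comparable Ws :
  is_flag Ws -> {in Ws &, forall W1 W2, (W1 <= W2)%MS || (W2 <= W1)%MS}.
Proof.
have submx_tr : transitive (fun A B : M => (A <= B)%MS) by move=> ? ? ?; apply: submx_trans.
elim: Ws => //= W Ws IH; rewrite /is_flag /= path_sortedE // => /andP[/allP leW flagWs].
move=> W1 W2; rewrite !inE => /predU1P[->|W1s] /predU1P[->|W2s].
- by rewrite submx_refl.
- by rewrite leW.
- by rewrite leW ?orbT.
- exact: IH.
Qed.

Lemma flag_stabJ_stable Ws g (s : gT) :
  is_flag Ws -> s \in (flag_stab Ws :^ g)%g ->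
  exists Ws', [/\ is_flag Ws', all (fun W => stablemx W s) Ws'
                & (flag_stab Ws :^ g)%g = flag_stab Ws'].
Proof.
rewrite flag_stabJ flag_stabP => flagWs sWs.
by exists [seq W *m g | W <- Ws]; split; rewrite ?is_flag_map.
Qed.

End Flags.

Section JordanDecomposition.
Variables (F : finFieldType) (n p : nat).
Local Notation gT := {'GL_n.+1[F]}.
Local Open Scope ring_scope.
Hypotheses (p_pr : prime p) (pF : p \in [pchar F]).

Lemma pnat_pchar_poly k : [pchar {poly F}].-nat (p ^ k)%N.
Proof. by rewrite (eq_pnat _ (@pchar_poly F)) (eq_pnat _ (pcharf_eq pF)) pnatX pnat_id. Qed.

Lemma unipotent_p_elt (u : gT) : unipotent u -> (p.-elt u)%g.
Proof.
case=> k Uk; have le_k : (k <= p ^ k)%N by apply/ltnW/ltn_expl/prime_gt1.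
have u_pk : GLval (u ^+ (p ^ k))%g = 1.
  rewrite GL_XE -horner_mx_Xn.
  have -> : 'X^(p ^ k) = ('X - 1) ^+ (p ^ k) + 1 :> {poly F}.
    by rewrite -[X in _ = _ + X](expr1n _ (p ^ k)) -exprDn_pchar ?pnat_pchar_poly // subrK.
  rewrite rmorphD rmorphXn rmorphB /= horner_mx_X rmorph1.
  by rewrite -(subnK le_k) exprD Uk mulr0 add0r.
have ord_u : (#[u]%g %| p ^ k)%N by rewrite order_dvdn; apply/eqP/val_inj.
by apply: pnat_dvd ord_u _; rewrite pnatX pnat_id.
Qed.

Lemma semisimple_p'_elt (s : gT) : semisimple s -> (p^'.-elt s)%g.
Proof.
move=> ss; apply/constt1P.
have /cycleP[m Dsp] := cycle_constt p s.
have [a ord_sp] := p_natP (p_elt_constt p s).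
have := expg_order s.`_p; rewrite ord_sp Dsp -expgM.
move/(congr1 GLval); rewrite GL_XE => s_ma.
have : horner_mx (GLval s) (('X^m - 1) ^+ (p ^ a)) = 0.
  rewrite exprDn_pchar ?pnat_pchar_poly // exprNn_pchar ?pnat_pchar_poly // expr1n -exprM.
  by rewrite rmorphB /= horner_mx_Xn s_ma rmorph1 subrr.
move/mxminpoly_min/(separable_dvdp_exp ss)/mxminpoly_minP.
rewrite rmorphB /= horner_mx_Xn rmorph1 => /eqP; rewrite subr_eq0 => /eqP s_m.
have s_m1 : GLval (s ^+ m)%g = GLval (1 : gT) by rewrite GL_XE s_m.
exact: val_inj s_m1.
Qed.

End JordanDecomposition.

Section CentralizerModules.
Variables (F : finFieldType) (n : nat) (s : {'GL_n.+1[F]}).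
Local Notation gT := {'GL_n.+1[F]}.
Local Notation M := 'M[F]_n.+1.
Local Notation S := (GLval s).
Local Open Scope ring_scope.
Implicit Types (A C E N P W X Y Z : M).

Lemma cent1_comm_mx (g : gT) : (g \in 'C[s])%g = comm_mxb S g.
Proof. by rewrite cent1E /comm_mxb -!GL_MxE eq_sym -val_eqE. Qed.

Lemma stablemx_cycle Y (t : gT) : stablemx Y S -> t \in <[s]>%g -> stablemx Y t.
Proof.
move=> sY /cycleP[i ->]; rewrite GL_XE; elim: i => [|i IH]; first by rewrite mulmx1.
by rewrite exprSr -mulmxE mulmxA (submx_trans (submxMr _ IH)).
Qed.

Lemma comm_mx_cycle C (t : gT) : comm_mx S C -> t \in <[s]>%g -> comm_mx t C.
Proof.
move=> cC /cycleP[i ->]; rewrite GL_XE; elim: i => [|i IH]; first exact: comm1mx.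
by rewrite exprSr -mulmxE; apply: comm_mx_sym; apply: comm_mxM; apply: comm_mx_sym.
Qed.

(* The Reynolds operator of <[s]>; dividing by #[s] is where the
   semisimplicity of s enters. *)
Definition cycle_average A : M :=
  (#[s]%g%:R)^-1 *: \sum_(t in <[s]>%g) (GLval t^-1 *m A *m GLval t).

Lemma comm_mx_average A : comm_mx S (cycle_average A).
Proof.
rewrite /comm_mx /cycle_average -scalemxAl -scalemxAr mulmx_sumr mulmx_suml.
congr (_ *: _); rewrite (reindex_inj (mulIg s)).
apply: eq_big => [t | t _]; first by rewrite groupMr // cycle_id.
by rewrite invMg !GL_MxE GL_VxE !mulmxA mulmxV ?GL_unitmx // mul1mx.
Qed.

Lemma average_sub A X Y :
  stablemx Y S -> stablemx X S -> (Y *m A <= X)%MS -> (Y *m cycle_average A <= X)%MS.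
Proof.
move=> sY sX YA_X; rewrite -scalemxAr scalemx_sub // mulmx_sumr summx_sub // => t t_s.
rewrite !mulmxA; apply: submx_trans (stablemx_cycle sX t_s); apply/submxMr.
by apply: submx_trans YA_X; apply/submxMr/stablemx_cycle; rewrite ?groupV.
Qed.

Hypothesis s_order : (#[s]%g%:R : F) != 0.

Lemma average_id A C Y :
  stablemx Y S -> comm_mx S C -> Y *m A *m C = Y -> Y *m cycle_average A *m C = Y.
Proof.
move=> sY cC YAC; rewrite -scalemxAr -scalemxAl mulmx_sumr mulmx_suml.
rewrite (eq_bigr (fun _ => Y)) => [|t t_s]; last first.
  have sYt : stablemx Y (GLval t^-1) by apply: stablemx_cycle; rewrite ?groupV.
  rewrite !mulmxA -(mulmxA _ (GLval t)) (comm_mx_cycle cC t_s) mulmxA.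
  rewrite -(mulmxKpV sYt) -(mulmxA _ Y A) -(mulmxA _ (Y *m A) C) YAC (mulmxKpV sYt).
  by rewrite -mulmxA GL_VxE mulVmx ?(GL_unitmx t) // mulmx1.
by rewrite sumr_const -orderE -scaler_nat scalerA mulVf // scale1r.
Qed.

Lemma exists_comm_proj W :
  stablemx W S -> exists E, [/\ comm_mx S E, (E <= W)%MS & W *m E = W].
Proof.
move=> sW; exists (cycle_average (proj_mx W W^C%MS)); split.
- exact: comm_mx_average.
- by rewrite -[cycle_average _]mul1mx average_sub ?submx1 ?proj_mx_sub.
- rewrite -[X in X = W]mulmx1 average_id ?mulmx1 ?proj_mx_id ?capmx_compl //.
  exact: comm_mx1.
Qed.

Lemma exists_comm_lift P Y Z :
  stablemx Y S -> stablemx Z S -> comm_mx S P -> (Y <= Z *m P)%MS ->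
  exists N, [/\ comm_mx S N, (Y *m N <= Z)%MS & Y *m N *m P = Y].
Proof.
move=> sY sZ cP Y_ZP; exists (cycle_average (pinvmx (Z *m P) *m Z)); split.
- exact: comm_mx_average.
- by rewrite average_sub // mulmxA submxMl.
- by rewrite average_id // mulmxA -mulmxA mulmxKpV.
Qed.

Definition hom_trace Y X : M :=
  (\sum_(N | comm_mxb S N && (Y *m N <= X)%MS) (Y *m N))%MS.

Lemma hom_trace_sup N X Y :
  comm_mx S N -> (Y *m N <= X)%MS -> (Y *m N <= hom_trace Y X)%MS.
Proof. by move=> /comm_mxP cN YN_X; apply: (sumsmx_sup N); rewrite ?cN. Qed.

Lemma hom_trace_min X X' Y :
  (forall N, comm_mx S N -> (Y *m N <= X)%MS -> (Y *m N <= X')%MS) ->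
  (hom_trace Y X <= X')%MS.
Proof. by move=> YX'; apply/sumsmx_subP => N /andP[/comm_mxP]; apply: YX'. Qed.

Lemma hom_trace_sub X Y : (hom_trace Y X <= X)%MS.
Proof. exact: hom_trace_min. Qed.

Lemma hom_trace_mulmx (g : gT) X Y :
  (g \in 'C[s])%g -> (hom_trace Y (X *m g) <= hom_trace Y X *m g)%MS.
Proof.
move=> gC; apply: hom_trace_min => N cN YN_Xg.
have g_unit : GLval g \in unitmx by apply: GL_unitmx.
have cgV : comm_mx S (invmx g) by move: gC; rewrite -groupV cent1_comm_mx => /comm_mxP.
rewrite -[Y *m N](mulmxKV g_unit) -(mulmxA Y); apply: submxMr; apply: hom_trace_sup.
  exact: comm_mxM.
by rewrite mulmxA -(mulmxK g_unit X) submxMr.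
Qed.

Lemma exists_radical_elt E N W :
  comm_mx S E -> (E <= W)%MS -> W *m E = W -> comm_mx S N ->
  exists2 g : gT, GLval g = 1%:M + (1%:M - E) *m N *m E &
    (g \in 'C[s])%g /\ forall W', (W <= W')%MS || (W' <= W)%MS -> stablemx W' g.
Proof.
move=> cE EW WE cN; set M0 := (1%:M - E) *m N *m E.
have E_1E : E *m (1%:M - E) = 0 by rewrite mulmxBr mulmx1 (mulmx_proj_sub WE EW) subrr.
have M0sq : M0 *m M0 = 0 by rewrite /M0 -!mulmxA (mulmxA E) E_1E mul0mx !mulmx0.
have M0inv : (1%:M + M0) *m (1%:M - M0) = 1%:M.
  by rewrite mulmxBr !mulmxDl !mul1mx mulmx1 M0sq addr0 addrK.
have [M0unit _] := mulmx1_unit M0inv.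
exists (Sub (1%:M + M0) M0unit : gT) => //; split.
  rewrite cent1_comm_mx; apply/comm_mxP/comm_mxD; first exact: comm_mx1.
  apply/comm_mxM/cE/comm_mxM/cN.
  by rewrite /comm_mx mulmxBr mulmxBl mulmx1 mul1mx cE.
move=> W' /orP[WW' | W'W]; rewrite /= mulmxDr mulmx1 addmx_sub //.
  by rewrite /M0 !(submx_trans (submxMl _ _)) // (submx_trans EW).
by rewrite /M0 !mulmxA mulmxBr mulmx1 (mulmx_proj_sub WE W'W) subrr !mul0mx sub0mx.
Qed.

(* With Z := W k and Y := Z (1 - E), the hom_trace of Y in W lies in the one
   in Z :&: W, whereas the one in Z contains the latter plus a copy of Y
   meeting it trivially.  As Z and W are isomorphic s-modules, their
   hom_traces have equal rank, so Y = 0. *)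
Lemma radical_stable_sub E W (k : gT) :
  stablemx W S -> (k \in 'C[s])%g -> comm_mx S E -> (E <= W)%MS -> W *m E = W ->
  (forall N, comm_mx S N -> (W *m k *m ((1%:M - E) *m N *m E) <= W *m k)%MS) ->
  (W *m k <= W)%MS.
Proof.
move=> sW kC cE EW WE Z_stab.
set Z := W *m GLval k; set P := 1%:M - E; set Y := Z *m P; set U := (Z :&: W)%MS.
have ck : comm_mx S k by apply/comm_mxP; rewrite -cent1_comm_mx.
have cP : comm_mx S P by rewrite /comm_mx /P mulmxBr mulmxBl mulmx1 mul1mx cE.
have sZ : stablemx Z S by rewrite /Z -mulmxA -ck mulmxA submxMr.
have sY : stablemx Y S by rewrite /Y -mulmxA -cP mulmxA submxMr.
have WP0 m (X : 'M_(m, n.+1)) : (X <= W)%MS -> X *m P = 0.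
  by move=> XW; rewrite /P mulmxBr mulmx1 (mulmx_proj_sub WE XW) subrr.
have trW_U : (hom_trace Y W <= hom_trace Y U)%MS.
  apply: hom_trace_min => N cN YN_W; apply: hom_trace_sup => //.
  rewrite -(mulmx_proj_sub WE YN_W) sub_capmx (submx_trans (submxMl _ _) EW) andbT.
  by move: (Z_stab N cN); rewrite /Y -!mulmxA.
have trZ_W : (\rank (hom_trace Y Z) <= \rank (hom_trace Y W))%N.
  rewrite -(mxrankMfree (hom_trace Y W) (GL_row_free k)); exact/mxrankS/hom_trace_mulmx.
have [N0 [cN0 YN0_Z YN0P]] := exists_comm_lift sY sZ cP (submx_refl Y).
have trU_Z : (hom_trace Y U + Y *m N0 <= hom_trace Y Z)%MS.
  rewrite addsmx_sub hom_trace_sup // andbT; apply: hom_trace_min => N cN YN_U.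
  exact/hom_trace_sup/(submx_trans YN_U)/capmxSl.
have trU_YN0 : (hom_trace Y U :&: Y *m N0)%MS = 0.
  apply: (capmx_retract_eq0 (P := P)); last by rewrite mulmxA YN0P.
  by apply/WP0/(submx_trans (hom_trace_sub _ _))/capmxSr.
have /eqP : \rank (Y *m N0) = 0%N.
  have := mxrank_sum_cap (hom_trace Y U) (Y *m N0); rewrite trU_YN0 mxrank0 addn0.
  move=> rk_sum; have := leq_trans (mxrankS trU_Z) (leq_trans trZ_W (mxrankS trW_U)).
  by rewrite rk_sum -{2}[\rank (hom_trace Y U)]addn0 leq_add2l leqn0 => /eqP.
rewrite mxrank_eq0 => /eqP YN0_0.
have ZE : Z = Z *m E.
  by apply/eqP; rewrite -subr_eq0 -{1}[Z]mulmx1 -mulmxBr -/P -/Y -YN0P YN0_0 mul0mx.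
by rewrite ZE (submx_trans (submxMl _ _) EW).
Qed.

Lemma norm_cent_flag_stab_sub Ws :
  is_flag Ws -> all (fun W => stablemx W S) Ws ->
  ('N_('C[s])(flag_stab Ws :&: 'C[s]) \subset flag_stab Ws)%g.
Proof.
move=> flagWs /allP sWs; apply/subsetP => k /setIP[kC]; rewrite -groupV => nLkV.
rewrite flag_stabP; apply/allP => W WWs.
have [E [cE EW WE]] := exists_comm_proj (sWs W WWs).
apply: (radical_stable_sub (sWs W WWs) kC cE EW WE) => N cN.
have [g Dg [gC gWs]] := exists_radical_elt cE EW WE cN.
have gL : (g \in flag_stab Ws :&: 'C[s])%g.
  rewrite inE gC andbT flag_stabP; apply/allP => W' W'Ws.
  by apply: gWs; apply: (is_flag_comparable flagWs).
move: gL; rewrite -(memJ_norm g nLkV) in_setI flag_stabP.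
case/andP=> /allP /(_ W WWs) + _; rewrite GL_conjE GL_VxE invmxK.
move=> /(submxMr (GLval k)); rewrite !mulmxA mulmxKV ?GL_unitmx // Dg mulmxDr mulmx1 => Zg.
rewrite -[X in (X <= _)%MS](addKr (W *m GLval k)) addmx_sub //.
  by rewrite (eqmx_opp (W *m GLval k)).
by rewrite !mulmxA in Zg *.
Qed.

End CentralizerModules.

Unset Implicit Arguments.
Local Open Scope group_scope.

Theorem mainTheorem2 (F : finFieldType) (n : nat) (P : {set {'GL_n.+1[F]}})
    (x s u : {'GL_n.+1[F]}) (Qs : {set {set {'GL_n.+1[F]}}}) :
  parabolic P ->
  x = s * u -> commute s u -> semisimple s -> unipotent u ->
  let H := 'C[s] in
  let Ps := [set P :^ g | g in [set: {'GL_n.+1[F]}] & s \in P :^ g] in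
  (* Qs is a set of representatives of the H-orbits (by conjugation) on Ps *)
  Qs \subset Ps ->
  (forall Q, Q \in Ps -> exists2 R, R \in Qs & exists2 h, h \in H & Q = R :^ h) ->
  (forall R1 R2, R1 \in Qs -> R2 \in Qs ->
     (exists2 h, h \in H & R2 = R1 :^ h) -> R1 = R2) ->
  (forall P', P' \in Qs -> parabolic_centralizer s (P' :&: H)) /\
  fcount P [set: {'GL_n.+1[F]}] x = (\sum_(P' in Qs) fcount (P' :&: H) H u)%N.
Proof.
case=> Ws [flagWs ->] -> csu ss un H Ps sQs coverQs uniqQs.
have [p p_pr pF] := finPcharP F.
have s_p' := semisimple_p'_elt p_pr pF ss.
have s_order : (#[s]%:R != 0 :> F)%R.
  by rewrite natf_neq0_pchar (eq_pnat _ (eq_negn (pcharf_eq pF))).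
have PsE R : R \in Qs -> exists Ws',
    [/\ is_flag Ws', all (fun W => stablemx W (GLval s)) Ws' & R = flag_stab Ws'].
  by case/(subsetP sQs)/imsetP => g /[!inE] /= s_Pg ->; apply: flag_stabJ_stable.
split=> [P' /PsE[Ws' [flagWs' sWs' ->]] | ]; first by exists Ws'; rewrite setIC.
rewrite (fcount_mul_pi_decomp (flag_stab_group Ws) csu s_p' (unipotent_p_elt p_pr pF un)).
rewrite (card_conjugates_cent_sum (P := flag_stab_group Ws) u sQs coverQs uniqQs).
apply: eq_bigr => R /PsE[Ws' [flagWs' sWs' ->]].
rewrite /H card_conjugates_meet //; first exact/cent1P/esym.
exact: norm_cent_flag_stab_sub.
Qed.
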